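(* For any integers $p\geq3$, $k\geq1$, there exists $\lambda^{(2)}=\lambda^{(2)}(p,k)>0$ such that, for every $\lambda>0$ for which $m_*(\lambda)$ is defined, $m_*(\lambda)<m_\lambda$ if $\lambda<\lambda^{(2)}$ and $m_*(\lambda)\geq m_\lambda$ if $\lambda\geq\lambda^{(2)}$.
   Context: For $\lambda>0$: $m_\lambda=\min\left\{1,\left(\frac{(p-2)\sqrt p}{\lambda\sqrt{p-1}}\right)^{1/k}\right\}$, and $m_*(\lambda)$ is the largest solution $m\in(0,1]$ of $\frac{\lambda m^k}{\sqrt p}=\frac{m^2}{\sqrt{1-m^2}}$ (when such a solution exists). *)

From Stdlib Require Import Reals.
Open Scope R_scope.

Definition m_lam (p k : nat) (lam : R) : R :=
  Rmin 1 (Rpower ((INR p - 2) * sqrt (INR p) / (lam * sqrt (INR p - 1))) (1 / INR k)).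

(* m is a solution in (0,1] of  lam m^k / sqrt p = m^2 / sqrt(1 - m^2).
   At m = 1 the right-hand side is infinite, so solutions lie in (0,1). *)
Definition mstar_eq (p k : nat) (lam m : R) : Prop :=
  0 < m < 1 /\ lam * m ^ k / sqrt (INR p) = m ^ 2 / sqrt (1 - m ^ 2).

(* is_mstar p k lam m : m_*(lam) is defined and equals m, i.e. m is the
   largest solution of the equation above. *)
Definition is_mstar (p k : nat) (lam m : R) : Prop :=
  mstar_eq p k lam m /\ forall m', mstar_eq p k lam m' -> m' <= m.

(* Write the equation defining m_* as lam * level k m = sqrt p, where
   level k m = m^k sqrt(1 - m^2) / m^2.  For a solution m, eliminating lam shows
   that m_lam <= m holds exactly when m >= m_crit := sqrt((p-2)/(p-1)), whatever
   lam is.  The function level k is continuous and positive on [m_crit, 1) and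
   vanishes at 1, so it attains its maximum over [m_crit, 1] at some m1 < 1; take
   lam2 := sqrt p / level k m1.  If lam < lam2, no solution lies in [m_crit, 1).
   If lam >= lam2, the intermediate value theorem yields a solution in [m1, 1),
   and m_* is at least that solution. *)

From Stdlib Require Import Reals Lra Lia Ranalysis5.
Open Scope R_scope.

Lemma Rpower_inv_nat_le_iff (n : nat) (b x : R) :
  (0 < n)%nat -> 0 < b -> 0 < x -> Rpower b (1 / INR n) <= x <-> b <= x ^ n.
Proof.
  intros hn hb hx.
  assert (hN : 0 < INR n) by (apply lt_0_INR; exact hn).
  assert (hb1 : Rpower (Rpower b (1 / INR n)) (INR n) = b).
  { rewrite Rpower_mult. replace (1 / INR n * INR n) with 1 by (field; lra).
    apply Rpower_1, hb. }
  assert (hx1 : Rpower (x ^ n) (1 / INR n) = x).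
  { rewrite <- Rpower_pow, Rpower_mult by exact hx.
    replace (INR n * (1 / INR n)) with 1 by (field; lra). apply Rpower_1, hx. }
  split; intro H.
  - rewrite <- hb1, <- Rpower_pow by exact hx.
    apply Rle_Rpower_l; [lra | split; [apply exp_pos | exact H]].
  - rewrite <- hx1. apply Rle_Rpower_l.
    + apply Rlt_le, Rdiv_lt_0_compat; lra.
    + split; assumption.
Qed.

Lemma Rdiv_le_iff (a b c : R) : 0 < b -> a / b <= c <-> a <= c * b.
Proof.
  intros hb. split; intro H.
  - replace a with (a / b * b) by (field; lra). apply Rmult_le_compat_r; lra.
  - replace c with (c * b / b) by (field; lra).
    apply Rmult_le_compat_r; [apply Rlt_le, Rinv_0_lt_compat|]; assumption.
Qed.

Lemma INR_ge_3 (p : nat) : (3 <= p)%nat -> 3 <= INR p.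
Proof. intros hp. apply le_INR in hp. simpl in hp. lra. Qed.

Definition level (k : nat) (m : R) : R := m ^ k * sqrt (1 - m ^ 2) / m ^ 2.

Section Level.

Variable k : nat.

Lemma level_continuous (m : R) : 0 < m <= 1 -> continuity_pt (level k) m.
Proof.
  intros hm.
  assert (hsq : continuity_pt (comp sqrt (fun z => 1 - z ^ 2)) m).
  { apply continuity_pt_comp.
    - apply derivable_continuous_pt. reg.
    - apply continuity_pt_sqrt. nra. }
  apply (continuity_pt_div (fun z => z ^ k * sqrt (1 - z ^ 2)) (fun z => z ^ 2)).
  - apply (continuity_pt_mult (fun z => z ^ k) (comp sqrt (fun z => 1 - z ^ 2))); [|exact hsq].
    apply derivable_continuous_pt. reg.
  - apply derivable_continuous_pt. reg.
  - apply pow_nonzero. lra.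
Qed.

Lemma level_pos (m : R) : 0 < m < 1 -> 0 < level k m.
Proof.
  intros hm. unfold level.
  apply Rdiv_lt_0_compat; [apply Rmult_lt_0_compat|]; try (apply pow_lt; lra).
  apply sqrt_lt_R0. nra.
Qed.

Lemma level_1 : level k 1 = 0.
Proof. unfold level. rewrite !pow1, Rminus_diag, sqrt_0. field. Qed.

Lemma level_argmax (a : R) : 0 < a < 1 ->
  exists m1, a <= m1 < 1 /\ forall m, a <= m < 1 -> level k m <= level k m1.
Proof.
  intros ha.
  destruct (continuity_ab_maj (level k) a 1) as [m1 [Hmax hm1]]; [lra| |].
  { intros m hm. apply level_continuous. lra. }
  exists m1. split; [split; [lra|] | intros m hm; apply Hmax; lra].
  destruct (Rle_lt_or_eq_dec _ _ (proj2 hm1)) as [|E]; [assumption|].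
  pose proof (Hmax a ltac:(lra)). pose proof (level_pos a ha).
  rewrite E, level_1 in *. lra.
Qed.

Lemma level_solution_above (lam s a : R) : 0 < a < 1 -> 0 < s -> s <= lam * level k a ->
  exists z, a <= z < 1 /\ lam * level k z = s.
Proof.
  intros ha hs H.
  destruct (Rle_lt_or_eq_dec _ _ H) as [Hlt|E]; [|exists a; split; [lra | symmetry; exact E]].
  set (g := fun z => s - lam * level k z).
  destruct (IVT_interv g a 1) as [z [hz gz]]; unfold g in *.
  - intros z hz. apply continuity_pt_minus; [apply continuity_pt_const; intros ? ?; reflexivity|].
    apply continuity_pt_scal, level_continuous. lra.
  - lra.
  - lra.
  - rewrite level_1. lra.
  - exists z. split; [split; [lra|] | lra].
    destruct (Rle_lt_or_eq_dec _ _ (proj2 hz)) as [|E]; [assumption|].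
    rewrite E, level_1 in gz. lra.
Qed.

End Level.

Definition m_crit (p : nat) : R := sqrt ((INR p - 2) / (INR p - 1)).

Lemma m_crit_bounds (p : nat) : (3 <= p)%nat -> 0 < m_crit p < 1.
Proof.
  intros hp. apply INR_ge_3 in hp.
  assert (hx0 : 0 < (INR p - 2) / (INR p - 1) < 1).
  { split; [apply Rdiv_lt_0_compat; lra|].
    replace ((INR p - 2) / (INR p - 1)) with (1 - / (INR p - 1)) by (field; lra).
    assert (0 < / (INR p - 1)) by (apply Rinv_0_lt_compat; lra). lra. }
  unfold m_crit. split; [apply sqrt_lt_R0; lra|].
  rewrite <- sqrt_1 at 2. apply sqrt_lt_1_alt. lra.
Qed.

Lemma mstar_eq_iff_level (p k : nat) (lam m : R) : (0 < p)%nat ->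
  mstar_eq p k lam m <-> 0 < m < 1 /\ lam * level k m = sqrt (INR p).
Proof.
  intros hp. apply lt_0_INR in hp.
  assert (hsp : 0 < sqrt (INR p)) by (apply sqrt_lt_R0; exact hp).
  unfold mstar_eq, level. split; intros [hm E]; split; try exact hm.
  all: assert (ht : 0 < sqrt (1 - m ^ 2)) by (apply sqrt_lt_R0; nra).
  all: assert (hm2 : 0 < m ^ 2) by (apply pow_lt; lra).
  - replace (lam * (m ^ k * sqrt (1 - m ^ 2) / m ^ 2))
      with (lam * m ^ k / sqrt (INR p) * (sqrt (INR p) * sqrt (1 - m ^ 2) / m ^ 2))
      by (field; lra).
    rewrite E. field. lra.
  - replace (lam * m ^ k / sqrt (INR p))
      with (lam * (m ^ k * sqrt (1 - m ^ 2) / m ^ 2) * (m ^ 2 / (sqrt (1 - m ^ 2) * sqrt (INR p))))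
      by (field; lra).
    rewrite E. field. lra.
Qed.

Lemma crit_sqrt_iff (P y : R) : 2 < P -> 0 < y < 1 ->
  (P - 2) * sqrt (1 - y) <= y * sqrt (P - 1) <-> (P - 2) / (P - 1) <= y.
Proof.
  intros hP hy.
  assert (hl : 0 <= (P - 2) * sqrt (1 - y)) by (apply Rmult_le_pos; [lra | apply sqrt_pos]).
  assert (hr : 0 <= y * sqrt (P - 1)) by (apply Rmult_le_pos; [lra | apply sqrt_pos]).
  assert (Hsq : ((P - 2) * sqrt (1 - y))² <= (y * sqrt (P - 1))² <-> P - 2 <= y * (P - 1)).
  { rewrite !Rsqr_mult, !Rsqr_sqrt by lra. unfold Rsqr.
    (* the difference of the two sides factors as (y (P - 1) - (P - 2)) (y + P - 2) *)
    split; intro H; nra. }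
  rewrite Rdiv_le_iff, <- Hsq by lra. split; intro H.
  - apply Rsqr_incr_1; assumption.
  - apply Rsqr_incr_0; assumption.
Qed.

Lemma m_lam_le_iff (p k : nat) (lam m : R) :
  (3 <= p)%nat -> (1 <= k)%nat -> 0 < lam -> 0 < m < 1 ->
  m_lam p k lam <= m <-> (INR p - 2) * sqrt (INR p) <= lam * m ^ k * sqrt (INR p - 1).
Proof.
  intros hp hk hlam hm. apply INR_ge_3 in hp.
  assert (hsp : 0 < sqrt (INR p)) by (apply sqrt_lt_R0; lra).
  assert (hs1 : 0 < sqrt (INR p - 1)) by (apply sqrt_lt_R0; lra).
  unfold m_lam.
  set (B := (INR p - 2) * sqrt (INR p) / (lam * sqrt (INR p - 1))).
  assert (hB : 0 < B) by (apply Rdiv_lt_0_compat; apply Rmult_lt_0_compat; lra).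
  assert (Hmin : Rmin 1 (Rpower B (1 / INR k)) <= m <-> Rpower B (1 / INR k) <= m).
  { unfold Rmin. destruct (Rle_dec 1 (Rpower B (1 / INR k))); split; intro; lra. }
  rewrite Hmin, Rpower_inv_nat_le_iff by (lia || lra).
  unfold B. rewrite Rdiv_le_iff by (apply Rmult_lt_0_compat; lra).
  replace (m ^ k * (lam * sqrt (INR p - 1))) with (lam * m ^ k * sqrt (INR p - 1)) by ring.
  reflexivity.
Qed.

Lemma m_lam_le_mstar_iff (p k : nat) (lam m : R) :
  (3 <= p)%nat -> (1 <= k)%nat -> 0 < lam -> mstar_eq p k lam m ->
  m_lam p k lam <= m <-> m_crit p <= m.
Proof.
  intros hp hk hlam Hm.
  apply mstar_eq_iff_level in Hm as [hm E]; [|lia].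
  rewrite m_lam_le_iff by assumption.
  apply INR_ge_3 in hp.
  set (P := INR p) in *.
  assert (hsp : 0 < sqrt P) by (apply sqrt_lt_R0; lra).
  assert (ht : 0 < sqrt (1 - m ^ 2)) by (apply sqrt_lt_R0; nra).
  assert (hm2 : 0 < m ^ 2 < 1) by (split; nra).
  assert (Elin : lam * m ^ k * sqrt (1 - m ^ 2) = sqrt P * m ^ 2).
  { unfold level in E. rewrite <- E. field. lra. }
  (* multiply through by sqrt (1 - m ^ 2) / sqrt P and substitute the equation *)
  transitivity ((P - 2) * sqrt (1 - m ^ 2) <= m ^ 2 * sqrt (P - 1)).
  { set (t := sqrt (1 - m ^ 2)) in *. set (s1 := sqrt (P - 1)).
    assert (Elin1 : lam * m ^ k * t * s1 = sqrt P * m ^ 2 * s1) by (rewrite Elin; reflexivity).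
    split; intro H.
    - apply (Rmult_le_compat_r t) in H; [|lra].
      apply (Rmult_le_reg_l (sqrt P)); [lra|]. nra.
    - apply (Rmult_le_compat_l (sqrt P)) in H; [|lra].
      apply (Rmult_le_reg_r t); [lra|]. nra. }
  rewrite crit_sqrt_iff by lra.
  unfold m_crit. fold P. split; intro H.
  - rewrite <- (sqrt_pow2 m) by lra. apply sqrt_le_1_alt, H.
  - rewrite <- (pow2_sqrt ((P - 2) / (P - 1))) by (apply Rlt_le, Rdiv_lt_0_compat; lra).
    apply pow_incr. split; [apply sqrt_pos | exact H].
Qed.

Theorem lemmaB2 (p k : nat) (hp : (3 <= p)%nat) (hk : (1 <= k)%nat) :
  exists lam2 : R, 0 < lam2 /\
    forall lam m : R, 0 < lam -> is_mstar p k lam m ->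
      (lam < lam2 -> m < m_lam p k lam) /\
      (lam2 <= lam -> m_lam p k lam <= m).
Proof.
  pose proof (m_crit_bounds p hp) as hc.
  destruct (level_argmax k (m_crit p) hc) as [m1 [hm1 Hmax]].
  assert (hl1 : 0 < level k m1) by (apply level_pos; lra).
  assert (hsp : 0 < sqrt (INR p)) by (apply sqrt_lt_R0, lt_0_INR; lia).
  exists (sqrt (INR p) / level k m1). split; [apply Rdiv_lt_0_compat; assumption|].
  intros lam m hlam [Hm Hlargest].
  pose proof (m_lam_le_mstar_iff p k lam m hp hk hlam Hm) as Hcrit.
  apply mstar_eq_iff_level in Hm as [hm E]; [|lia].
  split; intro Hlam.
  - apply Rnot_le_lt. rewrite Hcrit. intro hcm.
    pose proof (Hmax m (conj hcm (proj2 hm))) as Hle.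
    apply (Rlt_not_le _ _ Hlam), Rdiv_le_iff; [exact hl1|].
    rewrite <- E. apply Rmult_le_compat_l; lra.
  - rewrite Hcrit.
    apply Rdiv_le_iff in Hlam; [|exact hl1].
    destruct (level_solution_above k lam (sqrt (INR p)) m1) as [z [hz Ez]]; [lra | exact hsp | lra |].
    assert (Hz : mstar_eq p k lam z) by (apply mstar_eq_iff_level; [lia | split; [lra | exact Ez]]).
    pose proof (Hlargest z Hz). lra.
Qed.
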